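(* Let $d\ge 1$, $0<\mu\le L$, let $A\in\mathbb{R}^{d\times d}$ be symmetric with $\mu I\preceq A\preceq LI$, let $b\in\mathbb{R}^d$, and let $f(x)=\frac12 x^\top Ax+b^\top x$. Let $x_0\in\mathbb{R}^d$ be arbitrary and let $\{x_t\},\{G_t\}$ be generated by Sharpened-BFGS for quadratics (defined in the context), and assume $\nabla f(x_t)\neq 0$ for all $t$ considered. Then for all $t\ge 0$, $$\theta(A,G_t,x_{t+1}-x_t)\le 1-\frac{\mu}{L},$$ and consequently $\lambda_t\le \left(1-\frac{\mu}{L}\right)^t\lambda_0$ for all $t\ge 0$, where $\lambda_t:=\lambda_f(x_t)$.
   Context: For symmetric positive definite $A,G\in\mathbb{R}^{d\times d}$ and $u\in\mathbb{R}^d\setminus\{0\}$, the BFGS operator is $\mathrm{BFGS}(A,G,u):=G-\frac{Guu^\top G}{u^\top Gu}+\frac{Auu^\top A}{u^\top Au}$. The greedy vector is $\bar u(A,G):=\arg\max_{u\in\{e_1,\dots,e_d\}}\frac{u^\top Gu}{u^\top Au}$ (ties broken arbitrarily), where $e_i$ is the $i$-th standard basis vector. Define $\theta(A,G,u):=\left(\frac{u^\top (G-A)A^{-1}(G-A)u}{u^\top GA^{-1}Gu}\right)^{1/2}$. The Newton decrement is $\lambda_f(x):=\sqrt{\nabla f(x)^\top\nabla^2 f(x)^{-1}\nabla f(x)}$. Sharpened-BFGS for quadratics: set $G_0=LI$; for $t=0,1,2,\dots$: $x_{t+1}=x_t-G_t^{-1}\nabla f(x_t)$, $s_t=x_{t+1}-x_t$,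 $\bar G_t=\mathrm{BFGS}(A,G_t,s_t)$, $\bar u=\bar u(A,\bar G_t)$, $G_{t+1}=\mathrm{BFGS}(A,\bar G_t,\bar u)$. *)

From HB Require Import structures.
From mathcomp Require Import all_boot all_order all_algebra.
Set Implicit Arguments. Unset Strict Implicit. Unset Printing Implicit Defensive.
Import Order.TTheory GRing.Theory Num.Theory.
Local Open Scope ring_scope.

Section Defs.
Variables (R : rcfType) (d : nat).

Definition bform (M : 'M[R]_d) (u v : 'cV[R]_d) : R := (u^T *m M *m v) 0 0.

Definition sym_mx (M : 'M[R]_d) : Prop := M^T = M.

Definition loewner_le (M1 M2 : 'M[R]_d) : Prop :=
  forall v : 'cV[R]_d, bform M1 v v <= bform M2 v v.

Definition BFGS (A G : 'M[R]_d) (u : 'cV[R]_d) : 'M[R]_d :=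
  G - (bform G u u)^-1 *: (G *m u *m u^T *m G)
    + (bform A u u)^-1 *: (A *m u *m u^T *m A).

Definition e_ (i : 'I_d) : 'cV[R]_d := delta_mx i 0.

Definition is_greedy (A G : 'M[R]_d) (i : 'I_d) : Prop :=
  forall j : 'I_d,
    bform G (e_ j) (e_ j) / bform A (e_ j) (e_ j)
      <= bform G (e_ i) (e_ i) / bform A (e_ i) (e_ i).

Definition theta (A G : 'M[R]_d) (u : 'cV[R]_d) : R :=
  Num.sqrt (bform ((G - A) *m invmx A *m (G - A)) u u
            / bform (G *m invmx A *m G) u u).

Definition quadf (A : 'M[R]_d) (b x : 'cV[R]_d) : R :=
  2^-1 * bform A x x + (b^T *m x) 0 0.
Definition grad_quad (A : 'M[R]_d) (b x : 'cV[R]_d) : 'cV[R]_d := A *m x + b.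
Definition hess_quad (A : 'M[R]_d) (b x : 'cV[R]_d) : 'M[R]_d := A.

Definition newton_decr (A : 'M[R]_d) (b x : 'cV[R]_d) : R :=
  Num.sqrt (bform (invmx (hess_quad A b x)) (grad_quad A b x) (grad_quad A b x)).

Definition sharpened_bfgs_run (A : 'M[R]_d) (b : 'cV[R]_d) (L : R)
    (x0 : 'cV[R]_d) (x : nat -> 'cV[R]_d) (G : nat -> 'M[R]_d) : Prop :=
  x 0%N = x0 /\ G 0%N = L%:M /\
  forall t : nat,
    x t.+1 = x t - invmx (G t) *m grad_quad A b (x t) /\
    let Gbar := BFGS A (G t) (x t.+1 - x t) in
    exists i : 'I_d, is_greedy A Gbar i /\ G t.+1 = BFGS A Gbar (e_ i).

End Defs.

From HB Require Import structures.
From mathcomp Require Import all_boot all_order all_algebra.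
From mathcomp Require Import lra ring.
Import Order.TTheory GRing.Theory Num.Theory.
Set Implicit Arguments.
Unset Strict Implicit.
Unset Printing Implicit Defensive.

Local Open Scope ring_scope.

(* The bounds A <= G <= (L/mu) A hold for G_0 = L I and survive every BFGS
   update: completing the square in the direction u shows that the update
   replaces the form of G on the G-orthogonal complement of u by a quantity
   sandwiched between the corresponding forms of A and (L/mu) A.  Writing
   s = x_{t+1} - x_t and z = A^-1 G s, one has grad f(x_t) = - G s and
   grad f(x_{t+1}) = - (G - A) s, so theta(A, G, s) = lambda_{t+1} / lambda_t,
   and both numerator and denominator only involve the Gram forms of A and G
   on span {s, z}; the two bounds on G restricted to that plane give
   theta <= 1 - mu / L by an explicit quadratic certificate. *)

(* [a], [g], [D], [h] stand for A[s,s], G[s,s] = A[s,z], A[z,z] = G[s,z] and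
   G[z,z]; the hypotheses are [A <= G] and [mu G <= L A] on the plane {s, z}. *)
Lemma gram_bound (R : realFieldType) (mu L a g D h : R) :
  0 < mu -> mu <= L ->
  (forall x y : R, x ^+ 2 * a + 2 * x * y * g + y ^+ 2 * D
                   <= x ^+ 2 * g + 2 * x * y * D + y ^+ 2 * h) ->
  (forall x y : R, mu * (x ^+ 2 * g + 2 * x * y * D + y ^+ 2 * h)
                   <= L * (x ^+ 2 * a + 2 * x * y * g + y ^+ 2 * D)) ->
  L ^+ 2 * (D - 2 * g + a) <= (L - mu) ^+ 2 * D.
Proof.
move=> mu_gt0 muL lo hi.
have hi_s : mu * g <= L * a by have := hi 1 0; lra.
have F : mu * D + L * a <= (L + mu) * g.
  move: muL; rewrite le_eqVlt => /predU1P [eqmuL | ltmuL].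
  - rewrite -{}eqmuL in hi *.
    have h_le_D : h <= D by have := hi 0 1; rewrite -subr_ge0 -mulrBr pmulr_rge0 //; lra.
    have := lo 1 0; have := lo (-1) 1 => h1 h2.
    nra.
  - have := lo L (- mu); have := hi (-1) 1 => h1 h2.
    have : 0 <= (L - mu) * ((L + mu) * g - L * a - mu * D) by nra.
    by rewrite pmulr_rge0 ?subr_gt0 //; lra.
rewrite -subr_ge0.
have -> : (L - mu) ^+ 2 * D - L ^+ 2 * (D - 2 * g + a) =
    (2 * L - mu) * ((L + mu) * g - L * a - mu * D) + (L - mu) * (L * a - mu * g).
  by ring.
by apply: addr_ge0; apply: mulr_ge0; lra.
Qed.

Lemma sqrt_div_le (R : rcfType) (k N D : R) :
  0 <= k -> 0 <= D -> N <= k ^+ 2 * D -> Num.sqrt (N / D) <= k.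
Proof.
move=> k_ge0 D_ge0 NkD; rewrite -(ger0_norm k_ge0) -sqrtr_sqr ler_sqrt ?sqr_ge0 //.
have [->|D_neq0] := eqVneq D 0; first by rewrite invr0 mulr0 sqr_ge0.
by rewrite ler_pdivrMr // lt_def D_neq0.
Qed.

Lemma sqrt_le_mul (R : rcfType) (k N D : R) :
  0 <= k -> 0 <= D -> N <= k ^+ 2 * D -> Num.sqrt N <= k * Num.sqrt D.
Proof.
move=> k_ge0 D_ge0 NkD.
by rewrite -(ger0_norm k_ge0) -sqrtr_sqr -sqrtrM ?sqr_ge0 // ler_sqrt // mulr_ge0 ?sqr_ge0.
Qed.

Section BilinearForm.
Variables (R : rcfType) (d : nat).
Implicit Types (M N X : 'M[R]_d) (u v w : 'cV[R]_d).
Local Notation bf := (@bform R d).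

Lemma bform_mulmx M N u v : bf (M *m N) u v = bf M u (N *m v).
Proof. by rewrite /bform !mulmxA. Qed.

Lemma bform_congruence X M u v : bf X (M *m u) (M *m v) = bf (M^T *m X *m M) u v.
Proof. by rewrite /bform trmx_mul !mulmxA. Qed.

Lemma bform_tr M u v : bf M u v = bf M^T v u.
Proof.
rewrite /bform; transitivity (((u^T *m M *m v)^T) 0 0); first by rewrite [RHS]mxE.
by rewrite !trmx_mul trmxK mulmxA.
Qed.

Lemma bform_sym M u v : sym_mx M -> bf M u v = bf M v u.
Proof. by move=> symM; rewrite bform_tr symM. Qed.

Lemma bformDm M N u v : bf (M + N) u v = bf M u v + bf N u v.
Proof. by rewrite /bform mulmxDr mulmxDl mxE. Qed.

Lemma bformZm k M u v : bf (k *: M) u v = k * bf M u v.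
Proof. by rewrite /bform -scalemxAr -scalemxAl mxE. Qed.

Lemma bformBm M N u v : bf (M - N) u v = bf M u v - bf N u v.
Proof. by rewrite -scaleN1r bformDm bformZm mulN1r. Qed.

Lemma bformDr M u v w : bf M u (v + w) = bf M u v + bf M u w.
Proof. by rewrite /bform mulmxDr mxE. Qed.

Lemma bformZr M u v k : bf M u (k *: v) = k * bf M u v.
Proof. by rewrite /bform -scalemxAr mxE. Qed.

Lemma bformBr M u v w : bf M u (v - w) = bf M u v - bf M u w.
Proof. by rewrite -scaleN1r bformDr bformZr mulN1r. Qed.

Lemma bformDl M u v w : bf M (v + w) u = bf M v u + bf M w u.
Proof. by rewrite bform_tr bformDr -!bform_tr. Qed.

Lemma bformZl M u v k : bf M (k *: v) u = k * bf M v u.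
Proof. by rewrite bform_tr bformZr -bform_tr. Qed.

Lemma bformNN M u v : bf M (- u) (- v) = bf M u v.
Proof. by rewrite -!scaleN1r bformZl bformZr !mulN1r opprK. Qed.

Lemma bform_comb M (x y : R) u v : sym_mx M ->
  bf M (x *: u + y *: v) (x *: u + y *: v) =
  x ^+ 2 * bf M u u + 2 * x * y * bf M u v + y ^+ 2 * bf M v v.
Proof.
by move=> symM; rewrite !bformDl !bformDr !bformZl !bformZr (bform_sym v u symM); ring.
Qed.

Lemma bform_shift M u v t : sym_mx M -> bf M u u != 0 ->
  bf M (t *: u + v) (t *: u + v) =
  bf M v v - bf M u v ^+ 2 / bf M u u + bf M u u * (t + bf M u v / bf M u u) ^+ 2.
Proof. by move=> symM Muu_neq0; rewrite -[v in LHS]scale1r bform_comb //; field. Qed.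

Lemma bform_rank1 X N u v : bf (X *m u *m u^T *m N) v v = bf X v u * bf N u v.
Proof.
rewrite /bform.
have -> : v^T *m (X *m u *m u^T *m N) *m v = (v^T *m X *m u) *m (u^T *m N *m v)
  by rewrite !mulmxA.
by rewrite mxE big_ord1.
Qed.

Lemma bform_scalar k v : bf k%:M v v = k * bf 1%:M v v.
Proof. by rewrite -[k%:M]scalemx1 bformZm. Qed.

Lemma bform1_gt0 v : v != 0 -> 0 < bf 1%:M v v.
Proof.
move=> v_neq0; have [i vi_neq0] : exists i, v i 0 != 0.
  apply/existsP; apply: contraR v_neq0 => /existsPn v0.
  by apply/eqP/matrixP => i j; rewrite (ord1 j) mxE; apply/eqP/negPn/v0.
rewrite /bform mulmx1 mxE (bigD1 i) //= ltr_wpDr //.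
  by apply: sumr_ge0 => j _; rewrite mxE -expr2 sqr_ge0.
by rewrite mxE -expr2 exprn_even_gt0.
Qed.

Lemma posdef_unitmx M : (forall v, v != 0 -> 0 < bf M v v) -> M \in unitmx.
Proof.
move=> Mpd; rewrite unitmxE unitfE; apply/negP => /det0P [w w_neq0 wM0].
have := Mpd w^T; rewrite trmx_eq0 => /(_ w_neq0).
by rewrite /bform trmxK wM0 mul0mx mxE ltxx.
Qed.

End BilinearForm.

Section BFGSUpdate.
Variables (R : rcfType) (d : nat) (A : 'M[R]_d).
Hypothesis symA : sym_mx A.
Implicit Types (G : 'M[R]_d) (u v : 'cV[R]_d).
Local Notation bf := (@bform R d).

Lemma bform_BFGS G u v : sym_mx G ->
  bf (BFGS A G u) v v =
  bf G v v - bf G u v ^+ 2 / bf G u u + bf A u v ^+ 2 / bf A u u.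
Proof.
move=> symG; rewrite /BFGS bformDm bformBm !bformZm !bform_rank1.
by rewrite (bform_sym v u symG) (bform_sym v u symA) -!expr2 ![_^-1 * _]mulrC.
Qed.

Lemma sym_BFGS G u : sym_mx G -> sym_mx (BFGS A G u).
Proof.
move=> symG; rewrite /sym_mx /BFGS raddfD raddfB /= !linearZ /= !trmx_mul !trmxK.
by rewrite symG symA !mulmxA.
Qed.

Lemma BFGS_lower G u : sym_mx G -> 0 < bf A u u -> loewner_le A G ->
  loewner_le A (BFGS A G u).
Proof.
move=> symG Auu_gt0 AG v; rewrite bform_BFGS //.
have Guu_gt0 : 0 < bf G u u := lt_le_trans Auu_gt0 (AG u).
set t := - (bf G u v / bf G u u).
have := AG (t *: u + v).
have tG0 : t + bf G u v / bf G u u = 0 by rewrite addNr.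
rewrite !bform_shift ?gt_eqF // tG0 expr0n /= mulr0 addr0.
have : 0 <= bf A u u * (t + bf A u v / bf A u u) ^+ 2 by rewrite mulr_ge0 ?sqr_ge0 ?ltW.
lra.
Qed.

Lemma BFGS_upper (mu L : R) G u : 0 <= mu <= L -> sym_mx G ->
  0 < bf A u u -> 0 < bf G u u -> loewner_le (mu *: G) (L *: A) ->
  loewner_le (mu *: BFGS A G u) (L *: A).
Proof.
move=> /andP[mu_ge0 muL] symG Auu_gt0 Guu_gt0 GA v.
rewrite !bformZm bform_BFGS //.
set t := - (bf A u v / bf A u u).
have := GA (t *: u + v); rewrite !bformZm.
have tA0 : t + bf A u v / bf A u u = 0 by rewrite addNr.
rewrite !bform_shift ?gt_eqF // tA0 expr0n /= mulr0 addr0.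
have : 0 <= mu * (bf G u u * (t + bf G u v / bf G u u) ^+ 2).
  by rewrite mulr_ge0 // mulr_ge0 ?sqr_ge0 // ltW.
have : 0 <= (L - mu) * (bf A u v ^+ 2 / bf A u u).
  by rewrite mulr_ge0 ?subr_ge0 // mulr_ge0 ?sqr_ge0 // invr_ge0 ltW.
nra.
Qed.

End BFGSUpdate.

Lemma e_neq0 (R : rcfType) (d : nat) (i : 'I_d) : e_ R i != 0.
Proof.
apply/negP => /eqP /matrixP /(_ i 0); rewrite !mxE !eqxx => /eqP.
by rewrite oner_eq0.
Qed.

Lemma grad_quad_newton_step (R : rcfType) (d : nat) (A G : 'M[R]_d) b x :
  G \in unitmx ->
  grad_quad A b x = - (G *m ((x - invmx G *m grad_quad A b x) - x)).
Proof. by move=> Gu; rewrite addrC addKr mulmxN opprK mulmxA mulmxV // mul1mx. Qed.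

Lemma grad_quadD (R : rcfType) (d : nat) (A : 'M[R]_d) b x s :
  grad_quad A b (x + s) = grad_quad A b x + A *m s.
Proof. by rewrite /grad_quad mulmxDr addrAC. Qed.

Definition bfgs_bounds (R : rcfType) (d : nat) (mu L : R) (A G : 'M[R]_d) :=
  [/\ sym_mx G, loewner_le A G & loewner_le (mu *: G) (L *: A)].

Section SharpenedBFGS.
Variables (R : rcfType) (d : nat) (mu L : R) (A : 'M[R]_d).
Hypotheses (mu_gt0 : 0 < mu) (muL : mu <= L) (symA : sym_mx A)
  (A_ge : loewner_le mu%:M A).
Implicit Types (G : 'M[R]_d) (s v w x : 'cV[R]_d).
Local Notation bf := (@bform R d).
Local Notation bounds := (bfgs_bounds mu L A).

Lemma L_gt0 : 0 < L. Proof. exact: lt_le_trans muL. Qed.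

Lemma rate_ge0 : 0 <= 1 - mu / L.
Proof. by rewrite subr_ge0 ler_pdivrMr ?mul1r // L_gt0. Qed.

Lemma posdefA v : v != 0 -> 0 < bf A v v.
Proof.
move=> v_neq0; apply: lt_le_trans (A_ge v).
by rewrite (bform_scalar mu) mulr_gt0 // bform1_gt0.
Qed.

Lemma unitmxA : A \in unitmx.
Proof. exact: posdef_unitmx posdefA. Qed.

Lemma psdA v : 0 <= bf A v v.
Proof.
have [->|/posdefA/ltW//] := eqVneq v 0.
by rewrite /bform mulmx0 mxE.
Qed.

Lemma bform_invmx_ge0 w : 0 <= bf (invmx A) w w.
Proof.
have -> : w = A *m (invmx A *m w) by rewrite mulmxA mulmxV ?unitmxA // mul1mx.
by rewrite bform_congruence symA mulmxKV ?unitmxA // psdA.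
Qed.

Lemma BFGS_bounds G u : bounds G -> u != 0 -> bounds (BFGS A G u).
Proof.
move=> [symG AG GA] u_neq0; have Auu_gt0 := posdefA u_neq0.
split; [exact: sym_BFGS | exact: BFGS_lower |].
apply: BFGS_upper; rewrite ?(ltW mu_gt0) //; exact: lt_le_trans (AG u).
Qed.

Lemma bounds_unitmx G : bounds G -> G \in unitmx.
Proof.
by move=> [_ AG _]; apply: posdef_unitmx => v /posdefA /lt_le_trans; apply.
Qed.

(* With z := A^-1 G s both sides only involve the forms of A and G on the
   plane spanned by s and z, to which gram_bound applies. *)
Lemma bounds_contraction G s : bounds G ->
  bf ((G - A) *m invmx A *m (G - A)) s s
    <= (1 - mu / L) ^+ 2 * bf (G *m invmx A *m G) s s.
Proof.
move=> [symG AG GA]; set z := invmx A *m (G *m s).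
have Az : A *m z = G *m s by rewrite mulmxA mulmxV ?unitmxA // mul1mx.
have Asz : bf A s z = bf G s s by rewrite /bform -mulmxA Az mulmxA.
have Gsz : bf G s z = bf A z z.
  by rewrite (bform_sym s z symG) /bform -mulmxA -Az mulmxA.
rewrite !bform_mulmx -/z Gsz mulmxBl mulmxBr mulKmx ?unitmxA // -/z.
rewrite bformBm !bformBr Gsz Asz.
have -> : (1 - mu / L) ^+ 2 = (L - mu) ^+ 2 / L ^+ 2.
  by field; rewrite gt_eqF ?L_gt0.
rewrite mulrAC ler_pdivlMr ?exprn_gt0 ?L_gt0 // mulrC.
have -> : bf A z z - bf G s s - (bf G s s - bf A s s) =
    bf A z z - 2 * bf G s s + bf A s s by ring.
apply: (gram_bound (h := bf G z z)) => // x y.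
  by have := AG (x *: s + y *: z); rewrite !bform_comb // Asz Gsz.
by have := GA (x *: s + y *: z); rewrite !bformZm !bform_comb // Asz Gsz.
Qed.

Lemma theta_bounds G s : bounds G -> theta A G s <= 1 - mu / L.
Proof.
move=> bG; have [symG _ _] := bG.
apply: sqrt_div_le; [exact: rate_ge0 | | exact: bounds_contraction].
by rewrite -{1}symG -bform_congruence bform_invmx_ge0.
Qed.

Lemma newton_decr_step b G x : bounds G ->
  newton_decr A b (x - invmx G *m grad_quad A b x) <= (1 - mu / L) * newton_decr A b x.
Proof.
move=> bG; have [symG _ _] := bG.
set x' := x - invmx G *m grad_quad A b x.
have grad_x : grad_quad A b x = - (G *m (x' - x)).
  exact: grad_quad_newton_step (bounds_unitmx bG).
have grad_x' : grad_quad A b x' = - ((G - A) *m (x' - x)).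
  by rewrite -{1}(subrK x x') addrC grad_quadD grad_x mulmxBl opprB addrC.
rewrite /newton_decr /hess_quad grad_x grad_x' !bformNN !bform_congruence.
rewrite [(G - A)^T]raddfB /= symG symA; apply: sqrt_le_mul; rewrite ?rate_ge0 //.
  by rewrite -{1}symG -bform_congruence bform_invmx_ge0.
exact: bounds_contraction.
Qed.

Lemma run_bounds b x0 (x : nat -> 'cV[R]_d) (G : nat -> 'M[R]_d) :
  loewner_le A L%:M ->
  sharpened_bfgs_run A b L x0 x G -> (forall t, grad_quad A b (x t) != 0) ->
  forall t, bounds (G t).
Proof.
move=> A_le [_ [G0 step]] grad_neq0; elim=> [|t IH].
  rewrite G0; split=> [|//|v]; first by rewrite /sym_mx tr_scalar_mx.
  rewrite !bformZm (bform_scalar L) mulrCA ler_wpM2l ?(ltW L_gt0) //.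
  by rewrite -bform_scalar A_ge.
have [x_next [i [_ ->]]] := step t.
have s_neq0 : x t.+1 - x t != 0.
  apply: contra (grad_neq0 t) => /eqP s0.
  by rewrite (grad_quad_newton_step _ _ _ (bounds_unitmx IH)) -x_next s0 mulmx0 oppr0.
by apply: BFGS_bounds; [exact: BFGS_bounds | exact: e_neq0].
Qed.

End SharpenedBFGS.

Theorem theorem1 (R : rcfType) (d : nat) (hd : (0 < d)%N) (mu L : R)
  (hmu : 0 < mu) (hmuL : mu <= L) (A : 'M[R]_d) (b x0 : 'cV[R]_d)
  (hAsym : sym_mx A)
  (hAlo : loewner_le (mu%:M) A) (hAhi : loewner_le A (L%:M))
  (x : nat -> 'cV[R]_d) (G : nat -> 'M[R]_d)
  (hrun : sharpened_bfgs_run A b L x0 x G)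
  (hgrad : forall t : nat, grad_quad A b (x t) != 0) :
  forall t : nat,
    theta A (G t) (x t.+1 - x t) <= 1 - mu / L /\
    newton_decr A b (x t) <= (1 - mu / L) ^+ t * newton_decr A b (x 0%N).
Proof.
have bounds := run_bounds hmu hmuL hAsym hAlo hAhi hrun hgrad.
have [_ [_ step]] := hrun.
have contraction t :
    newton_decr A b (x t.+1) <= (1 - mu / L) * newton_decr A b (x t).
  by have [-> _] := step t; exact: newton_decr_step.
move=> t; split; first exact: theta_bounds.
elim: t => [|t IH]; first by rewrite expr0 mul1r.
rewrite exprS -mulrA; apply: le_trans (contraction t) _.
by rewrite ler_wpM2l // rate_ge0.
Qed.
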